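(* Let $n\ge1$ and let $\alpha=(\alpha_t)_{t\ge2},\beta=(\beta_t)_{t\ge2},\gamma=(\gamma_t)_{t\ge2},\delta=(\delta_t)_{t\ge2}$ be sequences of nonnegative integers. The number of Type OC permutations $\sigma\in\mathfrak S_n$ with $\mathrm{nu}_t(\sigma)=\alpha_t$, $\mathrm{cu}_t(\sigma)=\beta_t$, $\mathrm{nl}_t(\sigma)=\gamma_t$, $\mathrm{cl}_t(\sigma)=\delta_t$ for all $t\ge2$ equals the number of Type OC permutations $\sigma\in\mathfrak S_n$ with $\mathrm{nu}_t(\sigma)=\beta_t$, $\mathrm{cu}_t(\sigma)=\alpha_t$, $\mathrm{nl}_t(\sigma)=\delta_t$, $\mathrm{cl}_t(\sigma)=\gamma_t$ for all $t\ge2$. That is, the label $(\mathrm{nu}_2,\dots;\mathrm{cu}_2,\dots;\mathrm{nl}_2,\dots;\mathrm{cl}_2,\dots)$ and the label $(\mathrm{cu}_2,\dots;\mathrm{nu}_2,\dots;\mathrm{cl}_2,\dots;\mathrm{nl}_2,\dots)$ are equidistributed over Type OC permutations of $[n]$.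
   Context: For $\sigma\in\mathfrak S_n$: the upper arcs of $\sigma$ are the pairs $(a,\sigma(a))$ with $a\le\sigma(a)$ (a fixed point gives a loop $(a,a)$); the lower arcs are the pairs $(\sigma(a),a)$ with $\sigma(a)<a$. An element $x\in[n]$ is an upper opener if $x\le\sigma(x)$, an upper closer if $\sigma^{-1}(x)\le x$, a lower opener if $\sigma^{-1}(x)>x$, and a lower closer if $\sigma(x)<x$. For $t\ge2$: an upper $t$-crossing (enhanced) is a set of $t$ upper arcs $(a_1,b_1),\dots,(a_t,b_t)$ with $a_1<\dots<a_t\le b_1<b_2<\dots<b_t$; an upper $t$-nesting (enhanced) is a set of $t$ upper arcs with $a_1<\dots<a_t\le b_t<b_{t-1}<\dots<b_1$; a lower $t$-crossing is a set of $t$ lower arcs $(c_1,d_1),\dots,(c_t,d_t)$ with $c_1<\dots<c_t<d_1<\dots<d_t$; a lower $t$-nesting is a set of $t$ lower arcs with $c_1<\dots<c_t<d_t<\dots<d_1$. Let $\mathrm{nu}_t(\sigma),\mathrm{cu}_t(\sigma),\mathrm{nl}_t(\sigma),\mathrm{cl}_t(\sigma)$ be the numbers of upper $t$-nestings, upper $t$-crossings, lower $t$-nestings and lower $t$-crossings of $\sigma$. $\sigma$ is of Type OC if there are integers $0=s_0<s_1<\dots<s_r=n$ such that each interval $I=[s_{q-1}+1,s_q]$ satisfies $\sigma(I)=I$ and: (a) every lower opener in $I$ is strictly smaller than every lower closer in $I$ (in particular no element is both); (b) there are no $x<y$ in $I$ with $x$ an upper closer and $y$ an upper opener. *)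

(* Elements of [n] are represented 0-based by 'I_n
   (order-preserving shift x |-> x-1), permutations by 'S_n. *)
From Stdlib Require Import ClassicalEpsilon.
From HB Require Import structures.
From mathcomp Require Import all_boot all_order all_fingroup.
Set Implicit Arguments. Unset Strict Implicit. Unset Printing Implicit Defensive.

Definition pbool (P : Prop) : bool :=
  if excluded_middle_informative P then true else false.

Section Perm.
Variable n : nat.
Implicit Types (s : 'S_n) (x y : 'I_n).

Definition upper_opener s x : bool := (x <= s x)%N.
Definition upper_closer s x : bool := ((s^-1)%g x <= x)%N.
Definition lower_opener s x : bool := (x < (s^-1)%g x)%N.
Definition lower_closer s x : bool := (s x < x)%N.

(* Upper arcs (a, s a) with a <= s a are indexed by their opener a;
   lower arcs (s a, a) with s a < a are indexed by their opener c = s a,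
   whose closer is d = s^-1 c.  A t-crossing / t-nesting is a set of t arcs,
   counted as a strictly increasing t-tuple of openers a_1 < ... < a_t. *)
Definition incr t (f : {ffun 'I_t -> 'I_n}) : bool :=
  [forall i : 'I_t, forall j : 'I_t, (i < j)%N ==> (f i < f j)%N].

Definition cu t s : nat :=
  #|[set f : {ffun 'I_t -> 'I_n} | [&& incr f,
      [forall i : 'I_t, upper_opener s (f i)],
      [forall i : 'I_t, forall j : 'I_t, (f i <= s (f j))%N] &
      [forall i : 'I_t, forall j : 'I_t, (i < j)%N ==> (s (f i) < s (f j))%N]]]|.

Definition nu t s : nat :=
  #|[set f : {ffun 'I_t -> 'I_n} | [&& incr f,
      [forall i : 'I_t, upper_opener s (f i)],
      [forall i : 'I_t, forall j : 'I_t, (f i <= s (f j))%N] &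
      [forall i : 'I_t, forall j : 'I_t, (i < j)%N ==> (s (f j) < s (f i))%N]]]|.

Definition cl t s : nat :=
  #|[set f : {ffun 'I_t -> 'I_n} | [&& incr f,
      [forall i : 'I_t, lower_opener s (f i)],
      [forall i : 'I_t, forall j : 'I_t, (f i < (s^-1)%g (f j))%N] &
      [forall i : 'I_t, forall j : 'I_t, (i < j)%N ==> ((s^-1)%g (f i) < (s^-1)%g (f j))%N]]]|.

Definition nl t s : nat :=
  #|[set f : {ffun 'I_t -> 'I_n} | [&& incr f,
      [forall i : 'I_t, lower_opener s (f i)],
      [forall i : 'I_t, forall j : 'I_t, (f i < (s^-1)%g (f j))%N] &
      [forall i : 'I_t, forall j : 'I_t, (i < j)%N ==> ((s^-1)%g (f j) < (s^-1)%g (f i))%N]]]|.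

(* The interval [lo+1, hi] of [n], 0-based: {x | lo <= x < hi}. *)
Definition block (lo hi : nat) : {set 'I_n} := [set x : 'I_n | (lo <= x < hi)%N].

Definition good_block s (I : {set 'I_n}) : Prop :=
  [/\ s @: I = I,
      (forall x y, x \in I -> y \in I ->
         lower_opener s x -> lower_closer s y -> (x < y)%N) &
      (forall x y, x \in I -> y \in I -> (x < y)%N ->
         ~ (upper_closer s x /\ upper_opener s y))].

(* Type OC: breakpoints 0 = s_0 < s_1 < ... < s_r = n (r >= 1),
   given by the list cuts = [s_1; ...; s_r]. *)
Definition typeOC s : Prop :=
  exists cuts : seq nat,
    [/\ cuts != [::], sorted ltn (0 :: cuts), last 0 cuts = n &
        forall p, p \in zip (0 :: cuts) cuts -> good_block s (block p.1 p.2)].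

Definition label_ok s (a b c d : nat -> nat) : Prop :=
  typeOC s /\ forall t, (2 <= t)%N ->
    [/\ nu t s = a t, cu t s = b t, nl t s = c t & cl t s = d t].

End Perm.

(* Call k a closed prefix of s when s maps {x < k} into itself, and say that
   x and y lie in the same block of s when no closed prefix separates them.
   The blocks are s-stable intervals, and every interval of a Type OC
   decomposition is a union of blocks.  We build a map Phi that keeps every
   opener of s in place and, inside each block, mirrors the closers: the upper
   arc (a, s a) becomes (a, b') where b' is the upper closer whose rank among
   the upper closers of the block is reversed, and lower arcs are treated
   symmetrically by mirroring their closers among the lower closers.

   Mirroring reverses the relative order of the closers of two arcs, so it
   turns t-crossings into t-nestings and back, once we know that the arcs
   still overlap.  This is where the OC condition enters, in the weaker form
   [block_ordered]: inside a block, lower openers precede lower closers and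
   no upper closer precedes an upper opener.  Under this condition Phi
   preserves openers, closers, closed prefixes and blocks, hence it is an
   involution on block-ordered permutations which preserves Type OC and
   swaps nu with cu and nl with cl.  The theorem follows since Phi injects
   each label class into the swapped one. *)
From Stdlib Require Import ClassicalEpsilon.
From HB Require Import structures.
From mathcomp Require Import all_boot all_order all_fingroup.
From mathcomp Require Import zify.
Set Implicit Arguments. Unset Strict Implicit. Unset Printing Implicit Defensive.

Section TypeOCInvolution.
Variable n : nat.
Implicit Types (s : 'S_n) (x y z c : 'I_n) (S : {set 'I_n}).

Definition closed_prefix s (k : nat) : bool :=
  [forall x : 'I_n, (x < k) ==> (s x < k)].

Definition same_block s x y : bool :=
  [forall k : 'I_n.+1, closed_prefix s k ==> ((x < k) == (y < k))].

Lemma same_blockP s x y k :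
  same_block s x y -> closed_prefix s k -> (x < k) = (y < k).
Proof.
move=> /forallP H hk; case: (ltnP k n.+1) => kn.
  by have := H (Ordinal kn); rewrite hk /= => /eqP.
by rewrite (leq_trans (ltn_ord x)) ?(leq_trans (ltn_ord y)) // ltnW.
Qed.

Lemma same_block_refl s x : same_block s x x.
Proof. by apply/forallP => k; apply/implyP. Qed.

Lemma same_block_sym s x y : same_block s x y -> same_block s y x.
Proof.
move=> /forallP H; apply/forallP => k; apply/implyP => hk.
by have := H k; rewrite hk /= eq_sym.
Qed.

Lemma same_block_trans s x y z :
  same_block s x y -> same_block s y z -> same_block s x z.
Proof.
move=> /forallP H1 /forallP H2; apply/forallP => k; apply/implyP => hk.
by have := H1 k; have := H2 k; rewrite hk /= => /eqP <- /eqP ->.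
Qed.

Lemma same_block_mid s x y z :
  x <= y <= z -> same_block s x z -> same_block s x y.
Proof.
move=> /andP[xy yz] /forallP H; apply/forallP => k; apply/implyP => hk.
have /eqP := implyP (H k) hk; case: (ltnP y k) => yk.
  by rewrite (leq_ltn_trans xy yk).
by move=> ->; rewrite ltnNge (leq_trans yk yz).
Qed.

Lemma closed_prefix_image s k :
  closed_prefix s k -> s @: [set z : 'I_n | z < k] = [set z : 'I_n | z < k].
Proof.
move=> /forallP hk; apply/eqP; rewrite eqEcard card_imset; last exact: perm_inj.
rewrite leqnn andbT; apply/subsetP => y /imsetP[z]; rewrite inE => zk ->.
by rewrite inE; have := hk z; rewrite zk.
Qed.

Lemma closed_prefix_ge s k x : closed_prefix s k -> k <= x -> k <= s x.
Proof.
move=> hk kx; rewrite leqNgt; apply/negP => sxk.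
have : s x \in s @: [set z : 'I_n | z < k] by rewrite closed_prefix_image // inE.
case/imsetP => z; rewrite inE => zk /perm_inj ez.
by move: kx; rewrite ez leqNgt zk.
Qed.

Lemma closed_prefix_permV s k x : closed_prefix s k -> x < k -> (s^-1)%g x < k.
Proof.
move=> hk xk; rewrite ltnNge; apply/negP => /(closed_prefix_ge hk).
by rewrite permKV leqNgt xk.
Qed.

Lemma same_block_perm s x : same_block s x (s x).
Proof.
apply/forallP => k; apply/implyP => hk; apply/eqP.
case: (ltnP x k) => xk; first by move/forallP: hk => /(_ x); rewrite xk.
by apply/esym/negbTE; rewrite -leqNgt; apply: closed_prefix_ge.
Qed.

Lemma same_block_permV s x : same_block s x ((s^-1)%g x).
Proof.
by apply: same_block_sym; have := same_block_perm s ((s^-1)%g x); rewrite permKV.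
Qed.

Definition rank S y : nat := #|[set z in S | z < y]|.

Definition mirror S c : 'I_n :=
  odflt c [pick y in S | rank S y == #|S| - (rank S c).+1].

Lemma rank_mono S y y' : y \in S -> y < y' -> rank S y < rank S y'.
Proof.
move=> yS yy'; apply: proper_card; apply/properP; split.
  by apply/subsetP => z; rewrite !inE => /andP[-> zy]; apply: ltn_trans yy'.
by exists y; rewrite !inE ?yS ?yy' ?ltnn.
Qed.

Lemma rank_lt S y : y \in S -> rank S y < #|S|.
Proof.
move=> yS; apply: proper_card; apply/properP; split.
  by apply/subsetP => z; rewrite !inE => /andP[].
by exists y; rewrite // !inE ltnn andbF.
Qed.

Lemma rank_inj S : {in S &, injective (rank S)}.
Proof.
move=> y y' yS y'S e; apply: val_inj; case: (ltngtP (val y) (val y')) => // h.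
  by have := rank_mono yS h; rewrite e ltnn.
by have := rank_mono y'S h; rewrite e ltnn.
Qed.

(* Being injective into [0, #|S|), the rank takes every value there. *)
Lemma rank_onto S k : k < #|S| -> exists2 y, y \in S & rank S y = k.
Proof.
move=> kS; pose ranks := [seq rank S y | y <- enum S].
have uniq_ranks : uniq ranks.
  by rewrite map_inj_in_uniq ?enum_uniq // => y y'; rewrite !mem_enum; apply: rank_inj.
have sub_iota : {subset ranks <= iota 0 #|S|}.
  by move=> r /mapP[y]; rewrite mem_enum => yS ->; rewrite mem_iota rank_lt.
have [|_ /(_ k)] := uniq_min_size uniq_ranks sub_iota.
  by rewrite size_iota size_map -cardE.
by rewrite mem_iota kS; case/mapP => y; rewrite mem_enum => yS ->; exists y.
Qed.

Lemma mirror_spec S c :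
  c \in S -> mirror S c \in S /\ rank S (mirror S c) = #|S| - (rank S c).+1.
Proof.
move=> cS; rewrite /mirror; case: pickP => [y /andP[yS /eqP ry]|no_y].
  by split.
have hk : #|S| - (rank S c).+1 < #|S|.
  by have := rank_lt cS; case: #|S| => // m _; rewrite subSS ltnS leq_subr.
have [y yS ry] := rank_onto hk.
by have := no_y y; rewrite /= yS ry eqxx.
Qed.

Lemma mirror_in S c : c \in S -> mirror S c \in S.
Proof. by case/mirror_spec. Qed.

Lemma mirrorK S c : c \in S -> mirror S (mirror S c) = c.
Proof.
move=> cS; have [m1 r1] := mirror_spec cS; have [m2 r2] := mirror_spec m1.
apply: (rank_inj m2 cS); rewrite r2 r1; have := rank_lt cS; lia.
Qed.

Lemma mirror_decr S c c' :
  c \in S -> c' \in S -> c < c' -> mirror S c' < mirror S c.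
Proof.
move=> cS c'S cc'; have [m1 r1] := mirror_spec cS; have [m2 r2] := mirror_spec c'S.
have lt_rank : rank S (mirror S c') < rank S (mirror S c).
  by have := rank_mono cS cc'; have := rank_lt c'S; rewrite r1 r2; lia.
case: (ltngtP (val (mirror S c')) (val (mirror S c))) => // h.
  by have := rank_mono m1 h; rewrite ltnNge ltnW.
by move: lt_rank; rewrite (val_inj h) ltnn.
Qed.

Lemma lower_closerE s x : lower_closer s x = ~~ upper_opener s x.
Proof. by rewrite /lower_closer /upper_opener ltnNge. Qed.

Lemma lower_openerE s x : lower_opener s x = ~~ upper_closer s x.
Proof. by rewrite /lower_opener /upper_closer ltnNge. Qed.

Definition upper_closers s x : {set 'I_n} :=
  [set y | same_block s x y && upper_closer s y].
Definition lower_closers s x : {set 'I_n} :=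
  [set y | same_block s x y && lower_closer s y].

Lemma upper_closers_same s x y :
  same_block s x y -> upper_closers s x = upper_closers s y.
Proof.
move=> xy; apply/setP => z; rewrite !inE; congr (_ && _).
by apply/idP/idP => h; [apply: same_block_trans (same_block_sym xy) h
                      | apply: same_block_trans xy h].
Qed.

Lemma lower_closers_same s x y :
  same_block s x y -> lower_closers s x = lower_closers s y.
Proof.
move=> xy; apply/setP => z; rewrite !inE; congr (_ && _).
by apply/idP/idP => h; [apply: same_block_trans (same_block_sym xy) h
                      | apply: same_block_trans xy h].
Qed.

Lemma perm_upper_closers s x : upper_opener s x -> s x \in upper_closers s x.
Proof. by move=> h; rewrite inE same_block_perm /upper_closer permK. Qed.

Lemma self_upper_closers s y : upper_closer s y -> y \in upper_closers s y.
Proof. by move=> h; rewrite inE same_block_refl. Qed.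

Lemma self_lower_closers s x : ~~ upper_opener s x -> x \in lower_closers s x.
Proof. by move=> h; rewrite inE same_block_refl lower_closerE. Qed.

Lemma permV_lower_closers s y :
  ~~ upper_closer s y -> (s^-1)%g y \in lower_closers s y.
Proof. by rewrite -lower_openerE inE same_block_permV /lower_closer permKV. Qed.

Definition phi s x : 'I_n :=
  if upper_opener s x then mirror (upper_closers s x) (s x)
  else s (mirror (lower_closers s x) x).

Definition phi_inv s y : 'I_n :=
  if upper_closer s y then (s^-1)%g (mirror (upper_closers s y) y)
  else mirror (lower_closers s y) ((s^-1)%g y).

Lemma phiK s : cancel (phi s) (phi_inv s).
Proof.
move=> x; rewrite /phi; case: ifP => ho.
  have := mirror_in (perm_upper_closers ho); rewrite inE => /andP[xb uc].
  by rewrite /phi_inv uc -(upper_closers_same xb) mirrorK ?permK ?perm_upper_closers.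
have xl := self_lower_closers (negbT ho).
have := mirror_in xl; rewrite inE => /andP[xb lc].
rewrite /lower_closer in lc; rewrite /phi_inv /upper_closer permK leqNgt lc /=.
by rewrite -(lower_closers_same (same_block_trans xb (same_block_perm s _))) mirrorK.
Qed.

Definition Phi s : 'S_n := perm (can_inj (phiK s)).

Lemma PhiE s x : Phi s x = phi s x.
Proof. by rewrite permE. Qed.

Lemma PhiVE s y : ((Phi s)^-1)%g y = phi_inv s y.
Proof. by rewrite -{2}[y](permKV (Phi s)) PhiE phiK. Qed.

Lemma same_block_Phi s x : same_block s x (Phi s x).
Proof.
rewrite PhiE /phi; case: ifP => ho.
  by have := mirror_in (perm_upper_closers ho); rewrite inE => /andP[].
have := mirror_in (self_lower_closers (negbT ho)); rewrite inE => /andP[xb _].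
exact: same_block_trans xb (same_block_perm s _).
Qed.

Lemma same_block_PhiV s y : same_block s y (((Phi s)^-1)%g y).
Proof.
by apply: same_block_sym; have := same_block_Phi s (((Phi s)^-1)%g y); rewrite permKV.
Qed.

(* The block-local form of the Type OC condition. *)
Definition block_ordered s : Prop :=
  forall x y, same_block s x y ->
    (lower_opener s x -> lower_closer s y -> x < y) /\
    (upper_opener s x -> upper_closer s y -> x <= y).

Section BlockOrdered.
Variable s : 'S_n.
Hypothesis ordered : block_ordered s.

(* Phi has the same openers and closers as s: the mirror of the closer of an
   upper arc is still an upper closer weakly after the opener, by the order
   inside the block, and symmetrically for lower arcs. *)
Lemma Phi_upper_opener x : upper_opener (Phi s) x = upper_opener s x.
Proof.
rewrite {1}/upper_opener PhiE /phi; case: ifP => ho.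
  have := mirror_in (perm_upper_closers ho); rewrite inE => /andP[xb uc].
  by have [_ /(_ ho uc)] := ordered xb.
have := mirror_in (self_lower_closers (negbT ho)); rewrite inE => /andP[xb lc].
set y := mirror _ _ in xb lc *.
have lo : lower_opener s (s y) by rewrite /lower_opener permK.
have yb : same_block s (s y) x.
  by apply: same_block_sym; apply: same_block_trans xb (same_block_perm s _).
have [/(_ lo) + _] := ordered yb; rewrite lower_closerE ho => /(_ isT).
by move=> lt; rewrite leqNgt lt.
Qed.

Lemma Phi_upper_closer y : upper_closer (Phi s) y = upper_closer s y.
Proof.
rewrite {1}/upper_closer PhiVE /phi_inv; case: ifP => hc.
  have := mirror_in (self_upper_closers hc); rewrite inE => /andP[yb uc].
  set z := mirror _ _ in yb uc *.
  have uo : upper_opener s ((s^-1)%g z) by rewrite /upper_opener permKV.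
  have zb : same_block s ((s^-1)%g z) y.
    by apply: same_block_sym; apply: same_block_trans yb (same_block_permV s _).
  by have [_ /(_ uo hc)] := ordered zb.
have := mirror_in (permV_lower_closers (negbT hc)); rewrite inE => /andP[yb lc].
have [/(_ _ lc) + _] := ordered yb; rewrite lower_openerE hc => /(_ isT).
by move=> lt; rewrite leqNgt lt.
Qed.

Lemma Phi_lower_closer x : lower_closer (Phi s) x = lower_closer s x.
Proof. by rewrite !lower_closerE Phi_upper_opener. Qed.

Lemma Phi_lower_opener x : lower_opener (Phi s) x = lower_opener s x.
Proof. by rewrite !lower_openerE Phi_upper_closer. Qed.

(* If some x < k had Phi s x >= k,
   take in the block of x the largest m < k and the smallest m' >= k; then m
   is an upper closer and m' an upper opener of s, contradicting the order
   inside the block. *)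
Lemma closed_prefix_Phi k : closed_prefix (Phi s) k = closed_prefix s k.
Proof.
apply/idP/idP => hk; last first.
  apply/forallP => x; apply/implyP => xk.
  by rewrite -(same_blockP (same_block_Phi s x) hk).
apply/forallP => x; apply/implyP => xk; rewrite ltnNge; apply/negP => kx.
have xJ : same_block s x x && (x < k) by rewrite same_block_refl.
have sxK : same_block s x (s x) && (k <= s x) by rewrite same_block_perm.
case: (@arg_maxnP _ x (fun z => same_block s x z && (z < k)) val xJ)
  => m /andP[xm mk] m_max.
case: (@arg_minnP _ (s x) (fun z => same_block s x z && (k <= z)) val sxK)
  => m' /andP[xm' km'] m'_min.
have uc : upper_closer s m.
  rewrite -Phi_upper_closer /upper_closer; apply: m_max.
  rewrite (same_block_trans xm) ?same_block_PhiV //= ltnNge; apply/negP.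
  by move/(closed_prefix_ge hk); rewrite permKV leqNgt mk.
have uo : upper_opener s m'.
  rewrite -Phi_upper_opener /upper_opener; apply: m'_min.
  by rewrite (same_block_trans xm') ?same_block_Phi //= closed_prefix_ge.
have [_ /(_ uo uc)] := ordered (same_block_trans (same_block_sym xm') xm).
by rewrite leqNgt (leq_trans mk km').
Qed.

Lemma same_block_PhiE x y : same_block (Phi s) x y = same_block s x y.
Proof. by apply: eq_forallb => k; rewrite closed_prefix_Phi. Qed.

Lemma upper_closers_Phi x : upper_closers (Phi s) x = upper_closers s x.
Proof. by apply/setP => y; rewrite !inE same_block_PhiE Phi_upper_closer. Qed.

Lemma lower_closers_Phi x : lower_closers (Phi s) x = lower_closers s x.
Proof. by apply/setP => y; rewrite !inE same_block_PhiE Phi_lower_closer. Qed.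

Lemma block_ordered_Phi : block_ordered (Phi s).
Proof.
move=> x y; rewrite same_block_PhiE !Phi_lower_opener !Phi_lower_closer.
by rewrite !Phi_upper_opener !Phi_upper_closer; apply: ordered.
Qed.

Lemma PhiK : Phi (Phi s) = s.
Proof.
apply/permP => x; rewrite PhiE /phi Phi_upper_opener; case: ifP => ho.
  by rewrite upper_closers_Phi PhiE /phi ho mirrorK // perm_upper_closers.
have := mirror_in (self_lower_closers (negbT ho)); rewrite inE => /andP[xb lc].
rewrite lower_closers_Phi PhiE /phi; move: lc; rewrite lower_closerE => /negbTE ->.
by rewrite -(lower_closers_same xb) mirrorK ?self_lower_closers ?ho.
Qed.

End BlockOrdered.

Definition upper_pattern s t (cross : bool) (f : {ffun 'I_t -> 'I_n}) : bool :=
  [&& incr f, [forall i : 'I_t, upper_opener s (f i)],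
      [forall i : 'I_t, forall j : 'I_t, f i <= s (f j)] &
      [forall i : 'I_t, forall j : 'I_t, (i < j) ==>
         (if cross then s (f i) < s (f j) else s (f j) < s (f i))]].

Definition lower_pattern s t (cross : bool) (f : {ffun 'I_t -> 'I_n}) : bool :=
  [&& incr f, [forall i : 'I_t, lower_opener s (f i)],
      [forall i : 'I_t, forall j : 'I_t, f i < (s^-1)%g (f j)] &
      [forall i : 'I_t, forall j : 'I_t, (i < j) ==>
         (if cross then (s^-1)%g (f i) < (s^-1)%g (f j)
          else (s^-1)%g (f j) < (s^-1)%g (f i))]].

(* Pairwise overlapping upper arcs all lie in one block, so Phi mirrors their
   closers inside a common set: they keep overlapping, and their relative
   order is reversed. *)
Section UpperArcs.
Variables (s : 'S_n) (t : nat) (f : {ffun 'I_t -> 'I_n}).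
Hypothesis ordered : block_ordered s.
Hypothesis openers : forall i, upper_opener s (f i).
Hypothesis overlap : forall i j, f i <= s (f j).

Lemma upper_arcs_same_block i j : same_block s (f i) (f j).
Proof.
case: (leqP (f i) (f j)) => h.
  by apply: same_block_mid (same_block_perm s _); rewrite h overlap.
apply: same_block_sym; apply: same_block_mid (same_block_perm s _).
by rewrite (ltnW h) overlap.
Qed.

Lemma Phi_upper_overlap i j : f i <= Phi s (f j).
Proof.
have := mirror_in (perm_upper_closers (openers j)); rewrite inE => /andP[jb uc].
have [_ /(_ (openers i) uc)] := ordered (same_block_trans (upper_arcs_same_block i j) jb).
by rewrite PhiE /phi openers.
Qed.

Lemma Phi_upper_reverse i j : s (f i) < s (f j) -> Phi s (f j) < Phi s (f i).
Proof.
move=> h; rewrite !PhiE /phi !openers (upper_closers_same (upper_arcs_same_block j i)).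
apply: mirror_decr => //; first exact: perm_upper_closers.
by rewrite (upper_closers_same (upper_arcs_same_block i j)) perm_upper_closers.
Qed.

End UpperArcs.

Section LowerArcs.
Variables (s : 'S_n) (t : nat) (f : {ffun 'I_t -> 'I_n}).
Hypothesis ordered : block_ordered s.
Hypothesis openers : forall i, lower_opener s (f i).
Hypothesis overlap : forall i j, f i < (s^-1)%g (f j).

Lemma not_upper_closer i : ~~ upper_closer s (f i).
Proof. by rewrite -lower_openerE. Qed.

Lemma lower_arcs_same_block i j : same_block s (f i) (f j).
Proof.
case: (leqP (f i) (f j)) => h.
  by apply: same_block_mid (same_block_permV s _); rewrite h (ltnW (overlap j i)).
apply: same_block_sym; apply: same_block_mid (same_block_permV s _).
by rewrite (ltnW h) (ltnW (overlap i j)).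
Qed.

Lemma Phi_lower_overlap i j : f i < ((Phi s)^-1)%g (f j).
Proof.
have := mirror_in (permV_lower_closers (not_upper_closer j)).
rewrite inE => /andP[jb lc].
have [/(_ (openers i) lc) + _] := ordered (same_block_trans (lower_arcs_same_block i j) jb).
by rewrite PhiVE /phi_inv (negbTE (not_upper_closer j)).
Qed.

Lemma Phi_lower_reverse i j : (s^-1)%g (f i) < (s^-1)%g (f j) ->
  ((Phi s)^-1)%g (f j) < ((Phi s)^-1)%g (f i).
Proof.
move=> h; rewrite !PhiVE /phi_inv !(negbTE (not_upper_closer _)).
rewrite (lower_closers_same (lower_arcs_same_block j i)).
apply: mirror_decr => //; first exact: permV_lower_closers (not_upper_closer _).
rewrite (lower_closers_same (lower_arcs_same_block i j)).
exact: permV_lower_closers (not_upper_closer _).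
Qed.

End LowerArcs.

Lemma upper_pattern_Phi s t cross (f : {ffun 'I_t -> 'I_n}) : block_ordered s ->
  upper_pattern s cross f -> upper_pattern (Phi s) (~~ cross) f.
Proof.
move=> ordered /and4P[inc /forallP op /forallP ov /forallP mo].
have ov' i j : f i <= s (f j) by have /forallP := ov i; apply.
apply/and4P; split => //.
- by apply/forallP => i; rewrite Phi_upper_opener.
- by apply/forallP => i; apply/forallP => j; apply: Phi_upper_overlap.
- apply/forallP => i; apply/forallP => j; apply/implyP => ij.
  have /forallP /(_ j) := mo i; rewrite ij /=.
  by case: cross {mo} => h; apply: Phi_upper_reverse.
Qed.

Lemma lower_pattern_Phi s t cross (f : {ffun 'I_t -> 'I_n}) : block_ordered s ->
  lower_pattern s cross f -> lower_pattern (Phi s) (~~ cross) f.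
Proof.
move=> ordered /and4P[inc /forallP op /forallP ov /forallP mo].
have ov' i j : f i < (s^-1)%g (f j) by have /forallP := ov i; apply.
apply/and4P; split => //.
- by apply/forallP => i; rewrite Phi_lower_opener.
- by apply/forallP => i; apply/forallP => j; apply: Phi_lower_overlap.
- apply/forallP => i; apply/forallP => j; apply/implyP => ij.
  have /forallP /(_ j) := mo i; rewrite ij /=.
  by case: cross {mo} => h; apply: Phi_lower_reverse.
Qed.

Lemma upper_count_Phi s t cross : block_ordered s ->
  #|[set f : {ffun 'I_t -> 'I_n} | upper_pattern (Phi s) cross f]| =
  #|[set f : {ffun 'I_t -> 'I_n} | upper_pattern s (~~ cross) f]|.
Proof.
move=> ordered; apply: eq_card => f; rewrite !inE; apply/idP/idP.
  by move/(upper_pattern_Phi (block_ordered_Phi ordered)); rewrite PhiK.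
by move/(upper_pattern_Phi ordered); rewrite negbK.
Qed.

Lemma lower_count_Phi s t cross : block_ordered s ->
  #|[set f : {ffun 'I_t -> 'I_n} | lower_pattern (Phi s) cross f]| =
  #|[set f : {ffun 'I_t -> 'I_n} | lower_pattern s (~~ cross) f]|.
Proof.
move=> ordered; apply: eq_card => f; rewrite !inE; apply/idP/idP.
  by move/(lower_pattern_Phi (block_ordered_Phi ordered)); rewrite PhiK.
by move/(lower_pattern_Phi ordered); rewrite negbK.
Qed.

Definition stable_blocks s (lo : nat) (cuts : seq nat) : Prop :=
  forall p, p \in zip (lo :: cuts) cuts -> s @: block n p.1 p.2 = block n p.1 p.2.

Lemma zip_mem (lo : nat) (cuts : seq nat) (p : nat * nat) :
  p \in zip (lo :: cuts) cuts -> (p.1 \in lo :: cuts) && (p.2 \in cuts).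
Proof.
elim: cuts lo => [|c r IH] lo //=; rewrite inE => /orP[/eqP -> | /IH].
  by rewrite /= !inE !eqxx.
by case/andP; rewrite !inE => /orP[->|->] ->; rewrite !orbT.
Qed.

Lemma zip_cover (lo : nat) (cuts : seq nat) (x : nat) : lo <= x < last lo cuts ->
  exists2 p, p \in zip (lo :: cuts) cuts & p.1 <= x < p.2.
Proof.
elim: cuts lo => [|c r IH] lo /=.
  by case/andP => h1 h2; move: (leq_trans h2 h1); rewrite ltnn.
case/andP => h1 h2; case: (ltnP x c) => xc.
  by exists (lo, c); rewrite ?inE ?eqxx //= h1.
have [p pz hp] := IH c (introT andP (conj xc h2)).
by exists p => //; rewrite inE pz orbT.
Qed.

Lemma breakpoint_closed s (lo : nat) (cuts : seq nat) :
  sorted ltn (lo :: cuts) -> stable_blocks s lo cuts ->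
  forall c : nat, c \in cuts -> forall x : 'I_n, lo <= x < c -> s x < c.
Proof.
elim: cuts lo => [|c0 r IH] lo //= /andP[loc sr] H c.
have c0_min : all (ltn c0) r by apply: (order_path_min ltn_trans).
have B : s @: block n lo c0 = block n lo c0 by apply: (H (lo, c0)); rewrite inE eqxx.
rewrite inE => cin x /andP[lx xc]; case: (ltnP x c0) => xc0.
  have : s x \in block n lo c0 by rewrite -B imset_f // inE lx.
  rewrite inE => /andP[_ h]; case/orP: cin => [/eqP -> //|cr].
  by apply: ltn_trans h _; move/allP: c0_min => /(_ _ cr).
case/orP: cin => [/eqP ce|cr]; first by move: xc0; rewrite -ce leqNgt xc.
apply: (IH c0) => //; first by move=> p pz; apply: H; rewrite inE pz orbT.
by rewrite xc0.
Qed.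

Lemma cuts_closed s (cuts : seq nat) : sorted ltn (0 :: cuts) -> stable_blocks s 0 cuts ->
  forall c : nat, c \in 0 :: cuts -> closed_prefix s c.
Proof.
move=> so H c; rewrite inE => /orP[/eqP -> |cin].
  by apply/forallP => x; rewrite ltn0.
apply/forallP => x; apply/implyP => xc; apply: (breakpoint_closed so H cin).
by rewrite xc.
Qed.

Lemma block_same_block s (cuts : seq nat) (p : nat * nat) x y :
  sorted ltn (0 :: cuts) -> stable_blocks s 0 cuts -> p \in zip (0 :: cuts) cuts ->
  x \in block n p.1 p.2 -> same_block s x y -> y \in block n p.1 p.2.
Proof.
move=> so H pz; have /andP[p1 p2] := zip_mem pz.
have c1 := cuts_closed so H p1.
have c2 : closed_prefix s p.2 by apply: (cuts_closed so H); rewrite inE p2 orbT.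
rewrite !inE => /andP[a b] h.
by rewrite -(same_blockP h c2) b andbT leqNgt -(same_blockP h c1) -leqNgt.
Qed.

Lemma typeOC_block_ordered s : typeOC s -> block_ordered s.
Proof.
case=> cuts [_ so la good].
have H : stable_blocks s 0 cuts by move=> p /good [].
move=> x y xy; have [p pz hp] : exists2 p, p \in zip (0 :: cuts) cuts & p.1 <= x < p.2.
  by apply: zip_cover; rewrite la ltn_ord.
have [_ lower upper] := good p pz.
have xb : x \in block n p.1 p.2 by rewrite inE hp.
have yb := block_same_block so H pz xb xy.
split; first exact: lower.
move=> uo uc; rewrite leqNgt; apply/negP => yx.
exact: (upper y x yb xb yx (conj uc uo)).
Qed.

Lemma typeOC_Phi s : typeOC s -> typeOC (Phi s).
Proof.
move=> oc; have ordered := typeOC_block_ordered oc; case: oc => cuts [ne so la good].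
have H : stable_blocks s 0 cuts by move=> p /good [].
exists cuts; split => // p pz; have [_ lower upper] := good p pz.
split.
- apply/eqP; rewrite eqEcard card_imset ?leqnn ?andbT; last exact: perm_inj.
  apply/subsetP => _ /imsetP[z zb ->].
  exact: block_same_block so H pz zb (same_block_Phi s z).
- by move=> x y xb yb; rewrite Phi_lower_opener // Phi_lower_closer //; apply: lower.
- by move=> x y xb yb xy; rewrite Phi_upper_closer // Phi_upper_opener //; apply: upper.
Qed.

Lemma label_ok_Phi s (a b c d : nat -> nat) :
  label_ok s a b c d -> label_ok (Phi s) b a d c.
Proof.
case=> oc lab; have ordered := typeOC_block_ordered oc.
split; first exact: typeOC_Phi.
move=> t t2; have [<- <- <- <-] := lab t t2; split.
- exact: (upper_count_Phi t false ordered).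
- exact: (upper_count_Phi t true ordered).
- exact: (lower_count_Phi t false ordered).
- exact: (lower_count_Phi t true ordered).
Qed.

End TypeOCInvolution.

Lemma pboolP (P : Prop) : pbool P = true <-> P.
Proof. by rewrite /pbool; case: excluded_middle_informative. Qed.

Lemma label_class_le n (a b c d : nat -> nat) :
  #|[set s : 'S_n | pbool (label_ok s a b c d)]| <=
  #|[set s : 'S_n | pbool (label_ok s b a d c)]|.
Proof.
set A := [set s : 'S_n | _].
have inA s : s \in A -> label_ok s a b c d by rewrite inE => /pboolP.
rewrite -(@card_in_imset _ _ (@Phi n) A).
  apply: subset_leq_card; apply/subsetP => _ /imsetP[s /inA lab ->].
  by rewrite inE; apply/pboolP; apply: label_ok_Phi.
move=> s1 s2 /inA[/typeOC_block_ordered o1 _] /inA[/typeOC_block_ordered o2 _] e.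
by rewrite -(PhiK o1) e PhiK.
Qed.

Unset Implicit Arguments.
Set Strict Implicit.

Theorem mainTheorem4 (n : nat) (hn : (1 <= n)%N)
    (alpha beta gamma delta : nat -> nat) :
  #|[set s : 'S_n | pbool (label_ok s alpha beta gamma delta)]| =
  #|[set s : 'S_n | pbool (label_ok s beta alpha delta gamma)]|.
Proof. by apply/eqP; rewrite eqn_leq !label_class_le. Qed.
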